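(* Let $\beta>0$ and $c>b>0$, and let $(X_t)_{t=0,1,2,\ldots}$ be the discrete-time Markov chain on the nonnegative integers with $X_0=0$ and transition probabilities $$P(k,k+1)=\tfrac12 e^{-\beta c},\qquad P(k,k-1)=\tfrac12 e^{-\beta b},\qquad P(k,k)=1-\tfrac12 e^{-\beta c}-\tfrac12 e^{-\beta b}\quad (k\ge 1),$$ $$P(0,1)=\tfrac12 e^{-\beta c},\qquad P(0,0)=1-\tfrac12 e^{-\beta c},$$ and $P(k,l)=0$ for all other pairs $(k,l)$. For $k\ge1$ define the hitting time $\tau^0_k=\inf\{t\ge 1:\ X_t=k\}$. Then for every $k\ge 1$ and every $\varepsilon>0$, $$\lim_{\beta\to\infty} P\left(e^{\beta c k-\beta b(k-1)-\beta\varepsilon}<\tau^0_k<e^{\beta c k-\beta b(k-1)+\beta\varepsilon}\right)=1 .$$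
   Context: The constants $c>b>0$ are held fixed while $\beta\to\infty$; the law of the chain (and hence of $\tau^0_k$) depends on $\beta$ through the transition probabilities. *)

From HB Require Import structures.
From mathcomp Require Import all_boot all_order all_algebra.
From mathcomp Require Import all_classical all_reals all_analysis.
Set Implicit Arguments. Unset Strict Implicit. Unset Printing Implicit Defensive.
Import Order.TTheory GRing.Theory Num.Theory.
Local Open Scope ring_scope.

Section Chain.
Variable R : realType.

Definition trans (beta b c : R) (k l : nat) : R :=
  let p := expR (- (beta * c)) / 2 in
  let q := expR (- (beta * b)) / 2 in
  if k == 0%N then
    (if l == 1%N then p else if l == 0%N then 1 - p else 0)
  else
    (if l == k.+1 then p else if l == k.-1 then q
     else if l == k then 1 - p - q else 0).

(* the path of length t (states x_0 = 0, x_1, ..., x_t) encoded by f *)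
Definition path_of (t : nat) (f : {ffun 'I_t -> 'I_t.+1}) (s : nat) : nat :=
  nth 0%N (0%N :: [seq val (f i) | i <- enum 'I_t]) s.

Definition path_prob (beta b c : R) (t : nat) (x : nat -> nat) : R :=
  \prod_(s < t) trans beta b c (x s) (x s.+1).

(* P(tau^0_k = t), tau^0_k = inf {t >= 1 : X_t = k}, X_0 = 0.
   Paths from 0 of length t stay in [0, t], so summing over
   all f : 'I_t -> 'I_t.+1 covers all trajectories of positive probability. *)
Definition hit_prob (beta b c : R) (k t : nat) : R :=
  if t == 0%N then 0 else
  \sum_(f : {ffun 'I_t -> 'I_t.+1})
     (((path_of f t == k) &&
       [forall s : 'I_t, (0 < val s)%N ==> (path_of f (val s) != k)])%:R
      * path_prob beta b c t (path_of f)).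

Definition window_prob (beta b c : R) (k : nat) (lo hi : R) : R :=
  \sum_(0 <= t < (Num.truncn hi).+1)
     (((lo < t%:R) && (t%:R < hi))%:R * hit_prob beta b c k t).

End Chain.

From HB Require Import structures.
From mathcomp Require Import all_boot all_order all_algebra.
From mathcomp Require Import all_classical all_reals all_analysis.
From mathcomp Require Import ring lra.
Import Order.TTheory GRing.Theory Num.Theory.
Import numFieldNormedType.Exports.
Local Open Scope classical_set_scope.
Local Open Scope ring_scope.

(* With p = exp(-beta c)/2 and w = exp(beta (c - b)), the chain is a
   birth-death chain moving up with probability p and down with probability
   q = p w.  Killed at k, the law of tau^0_k is controlled by two drift
   functions of the killed transition operator: the potential w^(y-k),
   harmonic away from 0, gives P(tau <= t) <= w^-k + p (w - 1) w^-k (t + 1),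
   and the mean hitting time U, with U(0) <= w^(k+1) / (p (w - 1)^2), gives
   (t + 1) P(tau > t) <= U(0).  As 2 p exp(beta (c k - b (k - 1))) = w^(k-1),
   both error terms are O(1/beta) at the endpoints
   exp(beta (c k - b (k - 1)) -+ beta eps) of the window. *)

Section Trajectories.
Set Implicit Arguments. Unset Strict Implicit. Unset Printing Implicit Defensive.
Variable N : nat.

Definition traj t (f : {ffun 'I_t -> 'I_N}) (s : nat) : nat :=
  nth 0%N (0%N :: [seq val (f i) | i <- enum 'I_t]) s.

Lemma trajS t (f : {ffun 'I_t -> 'I_N}) (i : 'I_t) : traj f i.+1 = f i.
Proof. by rewrite /traj /= (nth_map i) ?size_enum_ord // nth_ord_enum. Qed.

Lemma traj_out t (f : {ffun 'I_t -> 'I_N}) s : (t <= s)%N -> traj f s.+1 = 0%N.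
Proof. by move=> h; rewrite /traj /= nth_default // size_map size_enum_ord. Qed.

Definition ffun_rcons t (f : {ffun 'I_t -> 'I_N}) (y : 'I_N) : {ffun 'I_t.+1 -> 'I_N} :=
  [ffun i => if unlift ord_max i is Some j then f j else y].

Lemma ffun_rcons_bij t :
  bijective (fun fy : {ffun 'I_t -> 'I_N} * 'I_N => ffun_rcons fy.1 fy.2).
Proof.
exists (fun f : {ffun 'I_t.+1 -> 'I_N} => ([ffun j => f (lift ord_max j)], f ord_max)).
  move=> [f y] /=; congr pair; last by rewrite ffunE unlift_none.
  by apply/ffunP => j; rewrite !ffunE liftK.
move=> f /=; apply/ffunP => i; rewrite !ffunE.
by case: unliftP => [j ->|->]; rewrite ?ffunE.
Qed.

Lemma traj_rcons t (f : {ffun 'I_t -> 'I_N}) y s :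
  traj (ffun_rcons f y) s = if s == t.+1 then val y else traj f s.
Proof.
case: s => [|s] //=; rewrite eqSS.
case: (ltngtP s t) => [st|ts|->]; last first.
- by rewrite (trajS _ ord_max) ffunE unlift_none.
- by rewrite !traj_out // ltnW.
have := trajS (ffun_rcons f y) (lift ord_max (Ordinal st)).
by rewrite lift_max => ->; rewrite (trajS _ (Ordinal st)) ffunE liftK.
Qed.

End Trajectories.

Section KilledChain.
Set Implicit Arguments. Unset Strict Implicit. Unset Printing Implicit Defensive.
Variables (R : realFieldType) (P : nat -> nat -> R) (k : nat).

Definition avoid_sum t N (g : nat -> R) : R :=
  \sum_(f : {ffun 'I_t -> 'I_N})
    [forall s : 'I_t, traj f s != k]%:R *
    \prod_(s < t) P (traj f s) (traj f s.+1) * g (traj f t).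

Definition killed_trunc N (g : nat -> R) (x : nat) : R :=
  (x != k)%:R * \sum_(y < N) P x y * g y.

Lemma avoid_sum0 N g : avoid_sum 0 N g = g 0%N.
Proof.
rewrite /avoid_sum (eq_bigr (fun _ => g 0%N)); last first.
  move=> f _; rewrite big_ord0 mulr1.
  have -> : [forall s : 'I_0, traj f s != k] by apply/fintype.forallP => -[].
  by rewrite mul1r.
by rewrite sumr_const card_ffun !card_ord expn0.
Qed.

Lemma avoid_sumS t N g : avoid_sum t.+1 N g = avoid_sum t N (killed_trunc N g).
Proof.
rewrite /avoid_sum (reindex _ (onW_bij _ (ffun_rcons_bij N t))) /=.
pose F (f : {ffun 'I_t -> 'I_N}) (y : 'I_N) :=
  [forall s : 'I_t.+1, traj (ffun_rcons f y) s != k]%:R *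
  \prod_(s < t.+1) P (traj (ffun_rcons f y) s) (traj (ffun_rcons f y) s.+1) *
  g (traj (ffun_rcons f y) t.+1).
rewrite (eq_bigr (fun fy => F fy.1 fy.2)) // -pair_bigA /= {}/F.
apply: eq_bigr => f _; rewrite /killed_trunc !mulr_sumr; apply: eq_bigr => y _.
have same s : (s <= t)%N -> traj (ffun_rcons f y) s = traj f s.
  by move=> st; rewrite traj_rcons ltn_eqF.
have -> : [forall s : 'I_t.+1, traj (ffun_rcons f y) s != k] =
          [forall s : 'I_t, traj f s != k] && (traj f t != k).
  apply/fintype.forallP/andP => [avoid | [/fintype.forallP avoid avoid_t] s].
    split; last by have := avoid ord_max; rewrite same.
    apply/fintype.forallP => s.
    by have := avoid (widen_ord (leqnSn t) s); rewrite /= same // ltnW.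
  rewrite same; last by rewrite -ltnS.
  case: (ltnP s t) => [st | ts]; first exact: (avoid (Ordinal st)).
  by have -> : nat_of_ord s = t by apply/anti_leq; rewrite ts -ltnS ltn_ord.
rewrite big_ord_recr /= (eq_bigr (fun s : 'I_t => P (traj f s) (traj f s.+1))); last first.
  by move=> s _; rewrite !same // ltnW.
rewrite !traj_rcons eqxx (ltn_eqF (ltnSn t)) -mulnb natrM.
by rewrite -!mulrA; congr (_ * _); rewrite mulrCA.
Qed.

Lemma avoid_sum_iter t N g : avoid_sum t N g = iter t (killed_trunc N) g 0%N.
Proof. by elim: t g => [|t IH] g; rewrite ?avoid_sum0 // avoid_sumS IH iterSr. Qed.

Hypothesis P_skip : forall x y, (x.+2 <= y)%N -> P x y = 0.

(* Killing on [k, +oo) rather than at [k] only: since the chain cannot jump up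
   by more than one, it reaches [k] before any larger state. *)
Definition killed (g : nat -> R) (x : nat) : R :=
  (x < k)%:R * \sum_(0 <= y < x.+2) P x y * g y.

Lemma iter_killed_trunc j N g x : (x <= k)%N -> (x + j < N)%N ->
  iter j (killed_trunc N) g x = iter j killed g x.
Proof.
elim: j x => [|j IH] x xk xjN //=; rewrite /killed_trunc /killed.
case: ltngtP xk => // [xk _ | -> _]; last by rewrite !mul0r.
rewrite !mul1r -(big_mkord xpredT (fun y => P x y * iter j (killed_trunc N) g y)).
have x2N : (x.+2 <= N)%N by apply: leq_trans xjN; rewrite addnS ltnS leq_addr.
rewrite (big_cat_nat (n := x.+2)) //= [X in _ + X]big_nat_cond [X in _ + X]big1.
  rewrite addr0; apply: eq_big_nat => y /andP[_ yx]; congr (_ * _); apply: IH.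
    by apply: leq_trans xk; rewrite -ltnS.
  by apply: leq_ltn_trans xjN; rewrite addnS -addSn leq_add2r -ltnS.
by move=> y /andP[/andP[x2y _] _]; rewrite P_skip // mul0r.
Qed.

Lemma avoid_sum_killed t g : avoid_sum t t.+1 g = iter t killed g 0%N.
Proof. by rewrite avoid_sum_iter iter_killed_trunc. Qed.

Lemma iter_killed_lin j a d f g x :
  iter j killed (fun y => a * f y + d * g y) x =
  a * iter j killed f x + d * iter j killed g x.
Proof.
elim: j x => [|j IH] x //=; rewrite /killed.
under eq_bigr do rewrite IH mulrDr mulrCA [P x _ * (d * _)]mulrCA.
by rewrite big_split -!mulr_sumr /=; ring.
Qed.

Hypothesis P_ge0 : forall x y, 0 <= P x y.
Hypothesis P_row : forall x, \sum_(0 <= y < x.+2) P x y = 1.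

Lemma iter_killed_le j f g : (forall y, f y <= g y) ->
  forall x, iter j killed f x <= iter j killed g x.
Proof.
move=> fg; elim: j => [|j IH] x /=; first exact: fg.
rewrite ler_wpM2l ?ler0n //; apply: ler_sum => y _.
by rewrite ler_wpM2l // IH.
Qed.

Lemma iter_killed_ge0 j g x : (forall y, 0 <= g y) -> 0 <= iter j killed g x.
Proof.
move=> g0; have := @iter_killed_le j (fun y => 0 * g y + 0 * g y) g _ x.
by rewrite iter_killed_lin !mul0r addr0; apply=> y; rewrite !mul0r addr0.
Qed.

Definition alive (y : nat) : R := (y < k)%:R.
Definition target (y : nat) : R := (y == k)%:R.
Definition survival t := iter t killed alive 0%N.
Definition hitting t := iter t killed target 0%N.

Lemma killed_alive_target : killed (fun y => 1 * alive y + 1 * target y) = alive.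
Proof.
apply: funext => x; rewrite /killed /alive; case: ltnP => xk; last by rewrite mul0r.
rewrite mul1r -[RHS](P_row x); apply: eq_big_nat => y /andP[_ yx].
have : (y <= k)%N by apply: leq_trans xk.
by rewrite /target; case: ltngtP => // _ _; rewrite /=; ring.
Qed.

Lemma survivalS t : survival t = survival t.+1 + hitting t.+1.
Proof.
rewrite /survival /hitting !iterSr -{1}killed_alive_target.
rewrite (_ : killed _ = fun y => 1 * killed alive y + 1 * killed target y).
  by rewrite iter_killed_lin !mul1r.
by apply: funext => y; exact: (iter_killed_lin 1).
Qed.

Lemma hitting_ge0 t : 0 <= hitting t.
Proof. by apply: iter_killed_ge0 => y; rewrite ler0n. Qed.

Lemma survival_ge0 t : 0 <= survival t.
Proof. by apply: iter_killed_ge0 => y; rewrite ler0n. Qed.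

Lemma survival_le s t : (s <= t)%N -> survival t <= survival s.
Proof.
move=> /subnK <-; elim: (t - s)%N => [|n IH] //.
by rewrite addSn (le_trans _ IH) // [leRHS]survivalS lerDl hitting_ge0.
Qed.

Hypothesis k_gt0 : (0 < k)%N.

Lemma survival0 : survival 0 = 1.
Proof. by rewrite /survival /= /alive k_gt0. Qed.

Lemma survival_le1 t : survival t <= 1.
Proof. by rewrite -survival0 survival_le. Qed.

Lemma sum_hitting t : \sum_(s < t.+1) hitting s = 1 - survival t.
Proof.
elim: t => [|t IH]; last by rewrite big_ord_recr /= IH (survivalS t); ring.
by rewrite big_ord1 survival0 subrr /hitting /= /target eq_sym gtn_eqF.
Qed.

Lemma sum_hitting_nat m n : (m <= n)%N ->
  \sum_(m.+1 <= t < n.+1) hitting t = survival m - survival n.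
Proof.
move=> mn; have := sum_hitting n; rewrite -(big_mkord xpredT).
rewrite (big_cat_nat (n := m.+1)) //= big_mkord sum_hitting.
by move=> sum_n; apply: (addrI (1 - survival m)); rewrite sum_n; ring.
Qed.

Lemma hit_by_le_drift (V : nat -> R) (d : R) :
  (forall y, 0 <= V y) -> 0 <= d ->
  (forall x, killed V x <= V x - target x + d * alive x) ->
  forall t, 1 - survival t <= V 0%N + d * t.+1%:R.
Proof.
move=> V0 d0 drift t.
have drift' y : killed V y <=
    (fun y => 1 * (fun y => 1 * V y + (-1) * target y) y + d * alive y) y.
  by rewrite /= !mul1r mulN1r; exact: drift.
have chain n : iter n killed V 0%N + \sum_(s < n) hitting s <= V 0%N + d * n%:R.
  elim: n => [|n IH]; first by rewrite big_ord0 /= addr0 mulr0 addr0.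
  have := iter_killed_le n drift' 0%N.
  rewrite !iter_killed_lin !mul1r mulN1r -/(hitting n) -/(survival n) -iterSr => step.
  have := survival_le1 n; have := hitting_ge0 n.
  rewrite big_ord_recr -natr1 /=; move: step IH => /=; nra.
have := chain t.+1; have := iter_killed_ge0 t.+1 0%N V0.
rewrite sum_hitting; lra.
Qed.

Lemma survival_le_drift (U : nat -> R) :
  (forall y, 0 <= U y) -> (forall x, killed U x <= U x - alive x) ->
  forall t, t.+1%:R * survival t <= U 0%N.
Proof.
move=> U0 drift t.
have drift' y : killed U y <= (fun y => 1 * U y + (-1) * alive y) y.
  by rewrite /= mul1r mulN1r; exact: drift.
have chain n : iter n killed U 0%N + \sum_(s < n) survival s <= U 0%N.
  elim: n => [|n IH]; first by rewrite big_ord0 /= addr0.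
  have := iter_killed_le n drift' 0%N.
  rewrite iter_killed_lin mul1r mulN1r -/(survival n) -iterSr => step.
  rewrite big_ord_recr /=; move: step IH => /=; lra.
have := chain t.+1; have := iter_killed_ge0 t.+1 0%N U0.
have : t.+1%:R * survival t <= \sum_(s < t.+1) survival s.
  rewrite -[t.+1 in X in X * _]card_ord mulr_natl -sumr_const; apply: ler_sum => s _.
  by apply: survival_le; rewrite -ltnS.
lra.
Qed.

End KilledChain.

Arguments alive {R} k y.
Arguments target {R} k y.

Section BirthDeath.
Set Implicit Arguments. Unset Strict Implicit. Unset Printing Implicit Defensive.
Variables (R : archiFieldType) (p q : R).

Definition bd (x y : nat) : R :=
  if x == 0%N then (if y == 1%N then p else if y == 0%N then 1 - p else 0)
  else (if y == x.+1 then p else if y == x.-1 then q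
        else if y == x then 1 - p - q else 0).

Lemma bd_skip x y : (x.+2 <= y)%N -> bd x y = 0.
Proof.
move=> x2y; have xy : (x < y)%N by apply: ltnW.
case: x x2y xy => [|x] x2y xy; rewrite /bd /= ?(gtn_eqF x2y) ?(gtn_eqF xy) //.
by rewrite (gtn_eqF (ltnW xy)).
Qed.

Lemma bd_step_sum x (g : nat -> R) :
  \sum_(0 <= y < x.+2) bd x y * g y =
  if x is x'.+1 then q * g x' + (1 - p - q) * g x + p * g x.+1
  else (1 - p) * g 0%N + p * g 1%N.
Proof.
case: x => [|x]; first by rewrite !big_nat_recr //= big_geq // add0r.
rewrite !big_nat_recr //= big_nat_cond big1 ?add0r; last first.
  move=> y /andP[/andP[_ yx] _]; rewrite /bd /= !ltn_eqF ?mul0r //.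
  - exact: ltn_trans yx (ltnSn _).
  - by apply: ltn_trans yx _; apply: ltn_trans (ltnSn _) _.
have x_lt2 : (x < x.+2)%N by apply: ltnW.
rewrite /bd /= !eqxx ?(ltn_eqF x_lt2) ?(ltn_eqF (ltnSn _)) ?(gtn_eqF (ltnSn _)) /=.
by ring.
Qed.

Lemma bd_row x : \sum_(0 <= y < x.+2) bd x y = 1.
Proof.
have := bd_step_sum x (fun=> 1); under eq_bigr do rewrite mulr1.
by case: x => [|x] ->; ring.
Qed.

Hypotheses (p_gt0 : 0 < p) (p_lt_q : p < q) (pq_le1 : p + q <= 1).

Lemma bd_ge0 x y : 0 <= bd x y.
Proof.
have := p_gt0; have := p_lt_q; have := pq_le1 => *.
by rewrite /bd; repeat case: ifP => _; lra.
Qed.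

Variable k : nat.
Hypothesis k_gt0 : (0 < k)%N.

Let w := q / p.

Lemma w_gt1 : 1 < w.
Proof. by rewrite /w ltr_pdivlMr // mul1r. Qed.

Lemma q_eq : q = p * w.
Proof. by rewrite /w mulrC divfK // gt_eqF. Qed.

(* [w ^ (y - k)] is harmonic for the chain away from 0. *)
Definition hit_potential (y : nat) : R := w ^+ y / w ^+ k.

Lemma hit_potential_ge0 y : 0 <= hit_potential y.
Proof.
have w0 : 0 < w := lt_trans ltr01 w_gt1.
by rewrite /hit_potential divr_ge0 // exprn_ge0 // ltW.
Qed.

Lemma hit_rate_ge0 : 0 <= p * (w - 1) / w ^+ k.
Proof.
have w1 := w_gt1; have w0 : 0 < w := lt_trans ltr01 w1.
by rewrite !divr_ge0 ?mulr_ge0 ?exprn_ge0 ?subr_ge0 ?ltW.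
Qed.

Lemma killed_hit_potential x :
  killed bd k hit_potential x <=
  hit_potential x - target k x + p * (w - 1) / w ^+ k * alive k x.
Proof.
have wk0 : w ^+ k != 0 by rewrite expf_neq0 // gt_eqF // (lt_trans ltr01 w_gt1).
rewrite /killed /alive /target; case: (ltngtP x k) => [xk | kx | ->] /=; first last.
- by rewrite mul0r /hit_potential divff // subrr mulr0 addr0.
- by rewrite mul0r subr0 mulr0 addr0 hit_potential_ge0.
rewrite mul1r bd_step_sum subr0 mulr1; case: x xk => [|x] _; rewrite /hit_potential.
  by rewrite expr0 expr1 le_eqVlt; apply/predU1P; left; field.
rewrite [leLHS](_ : _ = w ^+ x.+1 / w ^+ k) ?lerDl ?hit_rate_ge0 //.
by rewrite q_eq !exprS; field.
Qed.

Lemma bd_hit_by_le t :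
  1 - survival bd k t <= w ^- k + p * (w - 1) / w ^+ k * t.+1%:R.
Proof.
have := hit_by_le_drift bd_ge0 bd_row k_gt0 hit_potential_ge0 hit_rate_ge0
  killed_hit_potential t.
by rewrite /hit_potential expr0 div1r.
Qed.

(* The expected hitting time of [k] from [y]: [killed_mean_hit_time] is an
   equality below [k]. *)
Definition mean_hit_time (y : nat) : R :=
  \sum_(y <= i < k) (w ^+ i.+1 - 1) / (p * (w - 1)).

Lemma mean_hit_time_ge0 y : 0 <= mean_hit_time y.
Proof.
have w1 := w_gt1; apply: sumr_ge0 => i _.
by rewrite divr_ge0 ?mulr_ge0 ?subr_ge0 ?exprn_ege1 ?ltW.
Qed.

Lemma mean_hit_timeE y : (y < k)%N ->
  mean_hit_time y = (w ^+ y.+1 - 1) / (p * (w - 1)) + mean_hit_time y.+1.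
Proof. by move=> yk; rewrite /mean_hit_time big_ltn. Qed.

Lemma killed_mean_hit_time x :
  killed bd k mean_hit_time x <= mean_hit_time x - alive k x.
Proof.
have w1 := w_gt1; have wn0 : w - 1 != 0 by rewrite subr_eq0 gt_eqF.
rewrite /killed /alive; case: ltnP => xk /=; last by rewrite mul0r subr0 mean_hit_time_ge0.
rewrite mul1r bd_step_sum le_eqVlt; apply/predU1P; left.
case: x xk => [|x] xk; first by rewrite (mean_hit_timeE xk); field; rewrite wn0 gt_eqF.
rewrite (mean_hit_timeE (ltnW xk)) (mean_hit_timeE xk) q_eq !exprS.
by field; rewrite wn0 gt_eqF.
Qed.

Lemma mean_hit_time0_le : mean_hit_time 0 <= w ^+ k.+1 / (p * (w - 1) ^+ 2).
Proof.
have w1 := w_gt1; have w0 : 0 < w := lt_trans ltr01 w1.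
have wn0 : w - 1 != 0 by rewrite subr_eq0 gt_eqF.
have geom : \sum_(0 <= i < k) w ^+ i.+1 = (w ^+ k.+1 - w) / (w - 1).
  rewrite big_mkord exprS -[X in _ - X]mulr1 -mulrBr subrX1.
  by under eq_bigr do rewrite exprS; rewrite -mulr_sumr; field.
rewrite /mean_hit_time -mulr_suml.
apply: (@le_trans _ _ ((\sum_(0 <= i < k) w ^+ i.+1) / (p * (w - 1)))).
  apply: ler_wpM2r; first by rewrite invr_ge0 mulr_ge0 ?subr_ge0 ?ltW.
  by apply: ler_sum => i _; rewrite gerBl.
rewrite geom -mulrA -invfM mulrCA -expr2; apply: ler_wpM2r; last by rewrite gerBl ltW.
by rewrite invr_ge0 mulr_ge0 ?exprn_ge0 ?subr_ge0 ?ltW.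
Qed.

Lemma bd_survival_le t :
  t.+1%:R * survival bd k t <= w ^+ k.+1 / (p * (w - 1) ^+ 2).
Proof.
apply: le_trans mean_hit_time0_le.
exact: (survival_le_drift bd_ge0 bd_row mean_hit_time_ge0 killed_mean_hit_time).
Qed.

Variable e : R.
Hypotheses (e_gt0 : 0 < e) (w_ge2 : 2 <= w) (p_e : 2 * p * e = w ^+ k.-1).

Lemma bd_hit_by_truncn_le lo : 0 <= lo ->
  1 - survival bd k (Num.truncn lo) <= w^-1 + (lo + 1) / (2 * e).
Proof.
move=> lo0; apply: le_trans (bd_hit_by_le _) _.
have w1 := w_gt1; have w0 : 0 < w := lt_trans ltr01 w1.
have wk : w ^+ k = w * (2 * p * e) by rewrite p_e -exprS prednK.
apply: lerD.
  by rewrite lef_pV2 ?posrE ?exprn_gt0 // ler_eXnr // ltW.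
have -> : p * (w - 1) / w ^+ k = (1 - w^-1) / (2 * e).
  by rewrite wk; field; rewrite !gt_eqF.
rewrite mulrAC; apply: ler_wpM2r; first by rewrite invr_ge0 mulr_ge0 // ltW.
have : (Num.truncn lo).+1%:R <= lo + 1 by rewrite -natr1 lerD2r truncn_le.
have : 0 <= w^-1 by rewrite invr_ge0 ltW.
have : 0 <= (Num.truncn lo).+1%:R :> R by [].
nra.
Qed.

Lemma bd_survival_truncn_le hi : 2 <= hi ->
  survival bd k (Num.truncn hi).-1 <= 16 * e / hi.
Proof.
move=> hi2; set n := Num.truncn hi.
have n_gt0 : (0 < n)%N by rewrite truncn_gt0 (le_trans _ hi2) ?ler1n.
have hi_n : hi <= 2 * n%:R.
  have : hi < n%:R + 1 by rewrite natr1 truncnS_gt.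
  have : 1 <= n%:R :> R by rewrite ler1n.
  lra.
have w1 := w_gt1.
have bound : n%:R * survival bd k n.-1 <= 8 * e.
  apply: le_trans (_ : w ^+ k.+1 / (p * (w - 1) ^+ 2) <= _).
    by have := bd_survival_le n.-1; rewrite prednK.
  have wk : w ^+ k.+1 = w ^+ 2 * (2 * p * e) by rewrite p_e -exprD add2n prednK.
  rewrite wk ler_pdivrMr ?mulr_gt0 ?exprn_gt0 ?subr_gt0 //.
  have : w ^+ 2 <= 4 * (w - 1) ^+ 2 by have := w_ge2; nra.
  have : 0 <= p * e by rewrite mulr_ge0 ?ltW.
  nra.
have := survival_ge0 k bd_ge0 n.-1.
rewrite ler_pdivlMr ?(lt_le_trans _ hi2) //.
nra.
Qed.

End BirthDeath.

Lemma trans_bd (R : realType) (beta b c : R) :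
  trans beta b c = bd (expR (- (beta * c)) / 2) (expR (- (beta * b)) / 2).
Proof. by []. Qed.

Section Window.
Set Implicit Arguments. Unset Strict Implicit. Unset Printing Implicit Defensive.
Variables (R : realType) (beta b c : R) (k : nat).
Hypotheses (beta_gt0 : 0 < beta) (b_gt0 : 0 < b) (b_lt_c : b < c) (k_gt0 : (0 < k)%N).

Let p := expR (- (beta * c)) / 2.
Let q := expR (- (beta * b)) / 2.

Lemma trans_bd_params : [/\ 0 < p, p < q & p + q <= 1].
Proof.
have c_gt0 : 0 < c := lt_trans b_gt0 b_lt_c.
split; first by rewrite divr_gt0 ?expR_gt0.
  by rewrite ltr_pM2r ?invr_gt0 // ltr_expR ltrN2 ltr_pM2l.
have e1 (x : R) : 0 <= x -> expR (- x) <= 1 by move=> x0; rewrite expR_le1 oppr_le0.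
have := e1 _ (mulr_ge0 (ltW beta_gt0) (ltW c_gt0)).
have := e1 _ (mulr_ge0 (ltW beta_gt0) (ltW b_gt0)).
rewrite /p /q; lra.
Qed.

Let trans_ge0 x y : 0 <= trans beta b c x y.
Proof. by case: trans_bd_params => *; rewrite trans_bd bd_ge0. Qed.

Let trans_row x : \sum_(0 <= y < x.+2) trans beta b c x y = 1.
Proof. by rewrite trans_bd bd_row. Qed.

Lemma hit_prob_hitting t : hit_prob beta b c k t = hitting (trans beta b c) k t.
Proof.
case: t => [|t]; first by rewrite /hit_prob /hitting /= /target eq_sym gtn_eqF.
rewrite /hitting -(avoid_sum_killed k (@bd_skip _ _ _)) /hit_prob /avoid_sum /=.
apply: eq_bigr => f _; rewrite -mulnb natrM /target [RHS]mulrC mulrA.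
congr (_ * _ * _); congr (nat_of_bool _)%:R.
apply/fintype.forallP/fintype.forallP => avoid s.
  case: s avoid => -[|s] st avoid /=; first by rewrite /traj /= eq_sym gtn_eqF.
  exact: (avoid (Ordinal st)).
by apply/implyP => _; apply: avoid.
Qed.

Let survival_trans := survival (trans beta b c) k.

Lemma window_prob_le1 lo hi : window_prob beta b c k lo hi <= 1.
Proof.
rewrite /window_prob; set n := Num.truncn hi.
apply: (@le_trans _ _ (\sum_(0 <= t < n.+1) hit_prob beta b c k t)).
  apply: ler_sum => t _; rewrite ler_piMl ?lern1 ?leq_b1 //.
  by rewrite hit_prob_hitting hitting_ge0.
under eq_bigr do rewrite hit_prob_hitting.
by rewrite big_mkord sum_hitting // gerBl survival_ge0.
Qed.

Lemma window_prob_deficit_survival lo hi : 0 <= lo -> lo + 3 <= hi ->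
  1 - window_prob beta b c k lo hi <=
  (1 - survival_trans (Num.truncn lo)) + survival_trans (Num.truncn hi).-1.
Proof.
move=> lo0 lo_hi; rewrite /window_prob.
set n1 := Num.truncn lo; set n2 := Num.truncn hi.
have n12 : (n1.+2 <= n2)%N.
  rewrite -(ler_nat R).
  have : n1%:R <= lo by rewrite truncn_le.
  have : hi < n2.+1%:R by apply: truncnS_gt.
  rewrite -!natr1; lra.
have n2_eq : n2 = n2.-1.+1 by rewrite prednK // (leq_trans _ n12).
pose F t := ((lo < t%:R) && (t%:R < hi))%:R * hit_prob beta b c k t.
have F_ge0 t : true -> 0 <= F t.
  by rewrite mulr_ge0 ?ler0n // hit_prob_hitting hitting_ge0.
have mid : \sum_(n1.+1 <= t < n2) F t = survival_trans n1 - survival_trans n2.-1.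
  rewrite {1}n2_eq -(sum_hitting_nat trans_row k_gt0); last by rewrite -ltnS -n2_eq ltnW.
  apply: eq_big_nat => t /andP[n1t tn2]; rewrite /F hit_prob_hitting.
  have : t.+1%:R <= hi by rewrite -truncn_gt_nat -/n2 n2_eq.
  rewrite -truncn_lt_nat // n1t -natr1 => t_hi; have -> : t%:R < hi by lra.
  by rewrite mul1r.
rewrite -/(\sum_(0 <= t < n2.+1) F t) (big_cat_nat (n := n1.+1)) //=; last first.
  by rewrite ltnW // (leq_trans n12).
rewrite [\sum_(n1.+1 <= t < n2.+1) F t](big_cat_nat (n := n2)) //= ?mid.
  have := sumr_ge0 (index_iota 0 n1.+1) F_ge0.
  have := sumr_ge0 (index_iota n2 n2.+1) F_ge0.
  lra.
exact: leq_trans (leqnSn _) n12.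
Qed.

Lemma trans_bd_ratio : q / p = expR (beta * (c - b)).
Proof.
rewrite (_ : beta * (c - b) = - (beta * b) - - (beta * c)); last by ring.
by rewrite expRD opprK /p /q !expRN; field; rewrite !gt_eqF ?expR_gt0.
Qed.

Lemma trans_bd_time_scale :
  2 * p * expR (beta * c * k%:R - beta * b * (k%:R - 1)) = (q / p) ^+ k.-1.
Proof.
rewrite trans_bd_ratio -expRM_natl /p.
have -> : 2 * (expR (- (beta * c)) / 2) = expR (- (beta * c)) by field.
by rewrite -expRD; congr expR; rewrite -subn1 natrB //; ring.
Qed.

Lemma window_prob_deficit_exp (e Y : R) :
  2 * p * e = (q / p) ^+ k.-1 -> 2 <= q / p -> 2 <= e -> 2 <= Y ->
  1 - window_prob beta b c k (e / Y) (e * Y) <= (q / p)^-1 + 17 / Y + e^-1.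
Proof.
move=> p_e w2 e2 Y2; case: trans_bd_params => p_gt0 p_lt_q pq_le1.
have e_gt0 : 0 < e by apply: lt_le_trans e2.
have Y_gt0 : 0 < Y by apply: lt_le_trans Y2.
have lo0 : 0 <= e / Y by rewrite divr_ge0 ?ltW.
have hi2 : 2 <= e * Y by nra.
have lo_hi : e / Y + 3 <= e * Y.
  have : e / Y <= e / 2 by rewrite ler_pdivrMr // mulrAC ler_pdivlMr //; nra.
  nra.
have early := bd_hit_by_truncn_le p_gt0 p_lt_q pq_le1 k_gt0 e_gt0 p_e lo0.
have late := bd_survival_truncn_le p_gt0 p_lt_q pq_le1 k_gt0 e_gt0 w2 p_e hi2.
apply: le_trans (window_prob_deficit_survival lo0 lo_hi) _.
rewrite /survival_trans trans_bd -/p -/q; apply: le_trans (lerD early late) _.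
rewrite -addrA -[leRHS]addrA lerD2l.
have -> : (e / Y + 1) / (2 * e) + 16 * e / (e * Y) = 33 / 2 * Y^-1 + e^-1 / 2.
  by field; rewrite !gt_eqF.
have : 0 <= e^-1 by rewrite invr_ge0 ltW.
have : 0 <= Y^-1 by rewrite invr_ge0 ltW.
lra.
Qed.

Lemma window_prob_deficit_le eps : 0 < eps ->
  1 <= beta * (c - b) -> 1 <= beta * eps -> 1 <= beta * c ->
  1 - window_prob beta b c k
        (expR (beta * c * k%:R - beta * b * (k%:R - 1) - beta * eps))
        (expR (beta * c * k%:R - beta * b * (k%:R - 1) + beta * eps))
  <= ((c - b)^-1 + 17 / eps + c^-1) / beta.
Proof.
move=> eps_gt0 cb1 eps1 c1.
set E := beta * c * k%:R - beta * b * (k%:R - 1).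
have w_ge : 1 + beta * (c - b) <= q / p by rewrite trans_bd_ratio expR_ge1Dx.
have Y_ge : 1 + beta * eps <= expR (beta * eps) by exact: expR_ge1Dx.
have e_ge : 1 + beta * c <= expR E.
  apply: le_trans (expR_ge1Dx E); rewrite lerD2l /E.
  have : 1 <= k%:R :> R by rewrite ler1n.
  nra.
have -> : expR (E - beta * eps) = expR E / expR (beta * eps) by rewrite expRD expRN.
have -> : expR (E + beta * eps) = expR E * expR (beta * eps) by rewrite expRD.
have w2 : 2 <= q / p by lra.
have e2 : 2 <= expR E by lra.
have Y2 : 2 <= expR (beta * eps) by lra.
apply: le_trans (window_prob_deficit_exp trans_bd_time_scale w2 e2 Y2) _.
have inv_le (x y : R) : 0 < x -> x <= y -> y^-1 <= x^-1.
  by move=> x0 xy; rewrite lef_pV2 ?posrE // (lt_le_trans x0).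
have w_inv : (q / p)^-1 <= (beta * (c - b))^-1 by apply: inv_le; lra.
have Y_inv : (expR (beta * eps))^-1 <= (beta * eps)^-1 by apply: inv_le; lra.
have e_inv : (expR E)^-1 <= (beta * c)^-1 by apply: inv_le; lra.
rewrite [leRHS](_ : _ = (beta * (c - b))^-1 + 17 * (beta * eps)^-1 + (beta * c)^-1).
  lra.
by field; rewrite !gt_eqF // ?subr_gt0 // (lt_trans b_gt0).
Qed.

End Window.

Theorem lemma1 (R : realType) (b c : R) (hb : 0 < b) (hbc : b < c)
  (k : nat) (hk : (0 < k)%N) (eps : R) (heps : 0 < eps) :
  (fun beta : R =>
     window_prob beta b c k
       (expR (beta * c * k%:R - beta * b * (k%:R - 1) - beta * eps))
       (expR (beta * c * k%:R - beta * b * (k%:R - 1) + beta * eps)))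
    @ +oo --> (1 : R).
Proof.
have c_gt0 : 0 < c := lt_trans hb hbc.
have cb_gt0 : 0 < c - b by rewrite subr_gt0.
have large (a : R) : 0 < a -> \forall beta \near +oo, 1 <= beta * a.
  move=> a_gt0; apply: filterS (nbhs_pinfty_ge (num_real a^-1)) => beta.
  by rewrite -ler_pdivrMr // div1r.
apply/cvgrPdist_le => eta eta_gt0; near=> beta.
have beta_gt0 : 0 < beta by near: beta; exact: nbhs_pinfty_gt (num_real 0).
rewrite ger0_norm ?subr_ge0 ?window_prob_le1 //.
apply: le_trans (window_prob_deficit_le _ _ _ _ heps _ _ _) _ => //.
1-3: by near: beta; apply: large.
rewrite ler_pdivrMr // -ler_pdivrMl; last exact: eta_gt0.
near: beta; exact: nbhs_pinfty_ge (num_real _).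
Unshelve. all: end_near. Qed.
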